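(* Let $l:\mathbb{R}\times\mathbb{R}\to\mathbb{R}$ be doubly convex (jointly convex), let $Z=(z_1,\dots,z_n)$ be any sample and $f:\mathbb{X}\to\mathbb{R}$ any model. Then for all integers $1\le k\le k'\le n$, the empirical $k$-risks satisfy $r_k(f,Z)\ge r_{k'}(f,Z)$. In particular this holds for the Kullback–Leibler loss $\mathrm{kl}(\hat y,y)=y\log\frac{y}{\hat y}+(1-y)\log\frac{1-y}{1-\hat y}$ on $(0,1)\times[0,1]$ (with $0\log 0=0$) when $f$ takes values in $(0,1)$ and labels lie in $[0,1]$.
   Context: For a finite family $S$ and function $g$, $\hat{E}_S[g(z)]=\frac{1}{|S|}\sum_{z\in S}g(z)$. For a model $f$, loss $l(\hat y,y)$ and sample $Z=(z_1,\dots,z_n)$ with $z_i=(x_i,y_i)$, the empirical $k$-risk is $r_k(f,Z)=\binom{n}{k}^{-1}\sum_{I}l(\hat{E}_{S_I}[f(x)],\hat{E}_{S_I}[y])$, summing over all $k$-element index sets $I\subset\{1,\dots,n\}$ with $S_I=(z_i)_{i\in I}$. Doubly convex means jointly convex in both arguments. *)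

From HB Require Import structures.
From mathcomp Require Import all_boot all_order all_algebra.
From mathcomp Require Import all_classical all_reals all_analysis.
Set Implicit Arguments. Unset Strict Implicit. Unset Printing Implicit Defensive.
Import Order.TTheory GRing.Theory Num.Theory.
Local Open Scope ring_scope.

Definition doubly_convex (R : realType) (l : R -> R -> R) : Prop :=
  forall (a1 b1 a2 b2 t : R), 0 <= t -> t <= 1 ->
    l (t * a1 + (1 - t) * a2) (t * b1 + (1 - t) * b2)
      <= t * l a1 b1 + (1 - t) * l a2 b2.

Definition emp_mean (R : realType) (n : nat) (I : {set 'I_n}) (g : 'I_n -> R) : R :=
  (#|I|%:R)^-1 * \sum_(i in I) g i.

Definition k_risk (R : realType) (X : Type) (n : nat)
    (l : R -> R -> R) (f : X -> R) (Z : 'I_n -> X * R) (k : nat) : R :=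
  ('C(n, k)%:R)^-1 *
    \sum_(I : {set 'I_n} | #|I| == k)
       l (emp_mean I (fun i => f (Z i).1)) (emp_mean I (fun i => (Z i).2)).

Definition xlogxy (R : realType) (a b : R) : R :=
  if a == 0 then 0 else a * ln (a / b).

Definition kl_loss (R : realType) (yhat y : R) : R :=
  xlogxy y yhat + xlogxy (1 - y) (1 - yhat).

From HB Require Import structures.
From mathcomp Require Import all_boot all_order all_algebra.
From mathcomp Require Import all_classical all_reals all_analysis.
From mathcomp Require Import ring lra.
Import Order.TTheory GRing.Theory Num.Theory.
Local Open Scope ring_scope.

(* For a (k+1)-subset J the mean over J is the average,
   over j in J, of the means over the k-subsets J \ j.  Jensen's inequality
   then bounds the loss at J by the average of the losses at the J \ j, and
   summing over all (k+1)-subsets counts every k-subset exactly n - k times.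
   The absorption identity (k+1) C(n,k+1) = (n-k) C(n,k) turns this into
   r_{k+1} <= r_k, and induction gives r_{k'} <= r_k for 1 <= k <= k' <= n. *)

Lemma ln_le_subr1 {R : realType} (x : R) : 0 < x -> ln x <= x - 1.
Proof.
move=> x_gt0; have := @le_ln1Dx R (x - 1); rewrite addrCA subrr addr0.
by apply; rewrite ltrBrDl subrr.
Qed.

Lemma xlogx0y {R : realType} (b : R) : xlogxy 0 b = 0.
Proof. by rewrite /xlogxy eqxx. Qed.

(* (a, b) |-> a ln(a/b) lies above the linear function a ln q + a - b q,
   with equality when a / b = q; this is the supporting hyperplane at slope q. *)
Lemma xlogxy_tangent {R : realType} (a b q : R) : 0 <= a -> 0 < b -> 0 < q ->
  a * ln q + a - b * q <= xlogxy a b.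
Proof.
move=> a_ge0 b_gt0 q_gt0; have [->|a_neq0] := eqVneq a 0.
  by rewrite xlogx0y mul0r !add0r oppr_le0 mulr_ge0 // ltW.
have a_gt0 : 0 < a by rewrite lt0r a_neq0.
have r_gt0 : 0 < q * b / a by rewrite divr_gt0 // mulr_gt0.
have ln_ratio : ln (q * b / a) = ln q - ln (a / b).
  by rewrite -ln_div ?posrE ?divr_gt0 //; congr ln; field; rewrite !lt0r_neq0.
have := ler_wpM2l (ltW a_gt0) (ln_le_subr1 _ r_gt0).
rewrite /xlogxy (negbTE a_neq0) ln_ratio.
have -> : a * (q * b / a - 1) = b * q - a by field; rewrite lt0r_neq0.
lra.
Qed.

Lemma xlogxy_scale {R : realType} (s a b : R) :
  xlogxy (s * a) (s * b) = s * xlogxy a b.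
Proof.
rewrite /xlogxy mulf_eq0; have [->|s_neq0] /= := eqVneq s 0; first by rewrite mul0r.
case: eqP => [_|a_neq0]; first by rewrite mulr0.
by rewrite invfM mulrACA divff // mul1r mulrA.
Qed.

(* The log-sum inequality: sum the tangent bounds at q = (a1+a2)/(b1+b2). *)
Lemma log_sum_le {R : realType} (a1 b1 a2 b2 : R) :
  0 <= a1 -> 0 < b1 -> 0 <= a2 -> 0 < b2 ->
  xlogxy (a1 + a2) (b1 + b2) <= xlogxy a1 b1 + xlogxy a2 b2.
Proof.
move=> a1_ge0 b1_gt0 a2_ge0 b2_gt0.
have [a_eq0|a_neq0] := eqVneq (a1 + a2) 0.
  have [-> ->] : a1 = 0 /\ a2 = 0 by move: a_eq0; lra.
  by rewrite add0r !xlogx0y addr0.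
have a_gt0 : 0 < a1 + a2 by rewrite lt0r a_neq0 addr_ge0.
have b_gt0 : 0 < b1 + b2 by rewrite addr_gt0.
set q := (a1 + a2) / (b1 + b2).
have q_gt0 : 0 < q by rewrite divr_gt0.
have -> : xlogxy (a1 + a2) (b1 + b2) =
    (a1 * ln q + a1 - b1 * q) + (a2 * ln q + a2 - b2 * q).
  rewrite /xlogxy (negbTE a_neq0) -/q.
  have : (b1 + b2) * q = a1 + a2 by rewrite /q; field; rewrite lt0r_neq0.
  lra.
by apply: lerD; apply: xlogxy_tangent.
Qed.

Lemma xlogxy_convex {R : realType} (a1 b1 a2 b2 t : R) :
  0 <= a1 -> 0 < b1 -> 0 <= a2 -> 0 < b2 -> 0 <= t -> t <= 1 ->
  xlogxy (t * a1 + (1 - t) * a2) (t * b1 + (1 - t) * b2)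
    <= t * xlogxy a1 b1 + (1 - t) * xlogxy a2 b2.
Proof.
move=> a1_ge0 b1_gt0 a2_ge0 b2_gt0 t_ge0 t_le1.
have [->|t_neq0] := eqVneq t 0; first by rewrite subr0 !mul0r !mul1r !add0r.
have [->|t_neq1] := eqVneq t 1; first by rewrite subrr !mul0r !mul1r !addr0.
have t_gt0 : 0 < t by rewrite lt0r t_neq0.
have t'_gt0 : 0 < 1 - t by rewrite subr_gt0 lt_neqAle t_neq1.
rewrite -!xlogxy_scale; apply: log_sum_le.
- exact: mulr_ge0 (ltW t_gt0) a1_ge0.
- exact: mulr_gt0.
- exact: mulr_ge0 (ltW t'_gt0) a2_ge0.
- exact: mulr_gt0.
Qed.

(* A loss l that is jointly convex on a convex domain P of (prediction, label)
   pairs; the two cases of the theorem are instances of this notion. *)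
Record convex_loss_on {R : realType} (P : R -> R -> Prop) (l : R -> R -> R) : Prop := {
  domain_convex : forall a1 b1 a2 b2 t : R, 0 <= t -> t <= 1 -> P a1 b1 -> P a2 b2 ->
    P (t * a1 + (1 - t) * a2) (t * b1 + (1 - t) * b2);
  loss_convex : forall a1 b1 a2 b2 t : R, 0 <= t -> t <= 1 -> P a1 b1 -> P a2 b2 ->
    l (t * a1 + (1 - t) * a2) (t * b1 + (1 - t) * b2)
      <= t * l a1 b1 + (1 - t) * l a2 b2 }.

Lemma doubly_convex_on_setT {R : realType} {l : R -> R -> R} :
  doubly_convex l -> convex_loss_on (fun _ _ => True) l.
Proof. by move=> l_convex; split=> // a1 b1 a2 b2 t t_ge0 t_le1 _ _; apply: l_convex. Qed.

Lemma convex_comb_min_max {R : realType} (x y t : R) : 0 <= t -> t <= 1 ->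
  Num.min x y <= t * x + (1 - t) * y <= Num.max x y.
Proof.
move=> t_ge0 t_le1.
have min_x : Num.min x y <= x by rewrite ge_min lexx.
have min_y : Num.min x y <= y by rewrite ge_min lexx orbT.
have max_x : x <= Num.max x y by rewrite le_max lexx.
have max_y : y <= Num.max x y by rewrite le_max lexx orbT.
by apply/andP; split; nra.
Qed.

Definition kl_domain (R : realType) (yhat y : R) : Prop := 0 < yhat < 1 /\ 0 <= y <= 1.

(* kl(yhat, y) = xlogxy y yhat + xlogxy (1 - y) (1 - yhat) is a sum of two
   jointly convex terms on the box (0, 1) x [0, 1]. *)
Lemma kl_convex (R : realType) : convex_loss_on (@kl_domain R) (@kl_loss R).
Proof.
split=> a1 b1 a2 b2 t t_ge0 t_le1
  [/andP[a1_gt0 a1_lt1] /andP[b1_ge0 b1_le1]] [/andP[a2_gt0 a2_lt1] /andP[b2_ge0 b2_le1]].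
  have /andP[a_min a_max] := convex_comb_min_max a1 a2 _ t_ge0 t_le1.
  have /andP[b_min b_max] := convex_comb_min_max b1 b2 _ t_ge0 t_le1.
  split; apply/andP; split.
  - by apply: lt_le_trans a_min; rewrite lt_min a1_gt0 a2_gt0.
  - by apply: le_lt_trans a_max _; rewrite gt_max a1_lt1 a2_lt1.
  - by apply: le_trans b_min; rewrite le_min b1_ge0 b2_ge0.
  - by apply: le_trans b_max _; rewrite ge_max b1_le1 b2_le1.
have one_minus x y : 1 - (t * x + (1 - t) * y) = t * (1 - x) + (1 - t) * (1 - y).
  by ring.
rewrite /kl_loss !one_minus.
have label_term := xlogxy_convex _ _ _ _ _ b1_ge0 a1_gt0 b2_ge0 a2_gt0 t_ge0 t_le1.
have complement_term :
    xlogxy (t * (1 - b1) + (1 - t) * (1 - b2)) (t * (1 - a1) + (1 - t) * (1 - a2))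
      <= t * xlogxy (1 - b1) (1 - a1) + (1 - t) * xlogxy (1 - b2) (1 - a2).
  by apply: xlogxy_convex; rewrite // ?subr_ge0 ?subr_gt0.
lra.
Qed.

Definition avg {R : realType} {T : Type} (r : seq T) (h : T -> R) : R :=
  (size r)%:R^-1 * \sum_(i <- r) h i.

Lemma avg_cons {R : realType} {T : Type} (x : T) (s : seq T) (h : T -> R) :
  (0 < size s)%N -> avg (x :: s) h =
    ((size s).+1%:R)^-1 * h x + (1 - ((size s).+1%:R)^-1) * avg s h.
Proof.
move=> s_gt0; rewrite /avg big_cons /=.
have size_neq0 : (size s)%:R != 0 :> R by rewrite pnatr_eq0 -lt0n.
have size1_neq0 : (size s)%:R + 1 != 0 :> R by rewrite natr1.
by rewrite -natr1; field; rewrite size_neq0 size1_neq0.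
Qed.

Lemma jensen {R : realType} {P : R -> R -> Prop} {l : R -> R -> R}
    {T : eqType} {r : seq T} (F G : T -> R) :
  convex_loss_on P l -> r != [::] -> {in r, forall i, P (F i) (G i)} ->
  P (avg r F) (avg r G) /\ l (avg r F) (avg r G) <= avg r (fun i => l (F i) (G i)).
Proof.
move=> [P_convex l_convex]; elim: r => [//|x s IH] _ in_P.
have Px : P (F x) (G x) by apply: in_P; rewrite mem_head.
have [->|s_neq0] := eqVneq s [::].
  by rewrite /avg /= !big_seq1 invr1 !mul1r.
have [Ps ls] := IH s_neq0 (fun i si => in_P i (mem_behead (s := x :: s) si)).
rewrite !avg_cons ?lt0n ?size_eq0 //; set t := _^-1.
have t_ge0 : 0 <= t by rewrite invr_ge0.
have t_le1 : t <= 1 by rewrite invf_le1 ?ltr0n // ler1n.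
split; first exact: P_convex.
apply: le_trans (l_convex _ _ _ _ _ t_ge0 t_le1 Px Ps) _.
by rewrite lerD2l ler_wpM2l // subr_ge0.
Qed.

Lemma emp_mean_avg {R : realType} {n : nat} (I : {set 'I_n}) (g : 'I_n -> R) :
  emp_mean I g = avg (enum I) g.
Proof. by rewrite /emp_mean /avg big_enum -cardE. Qed.

Lemma enum_neq0 {T : finType} {A : {set T}} : (0 < #|A|)%N -> enum A != [::].
Proof. by rewrite cardE lt0n size_eq0. Qed.

Lemma emp_mean_in_domain {R : realType} {P : R -> R -> Prop} {l : R -> R -> R}
    {n : nat} (F G : 'I_n -> R) (I : {set 'I_n}) :
  convex_loss_on P l -> (forall i, P (F i) (G i)) -> (0 < #|I|)%N ->
  P (emp_mean I F) (emp_mean I G).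
Proof.
move=> l_convex in_P I_gt0; rewrite !emp_mean_avg.
by have [] := jensen F G l_convex (enum_neq0 I_gt0) (fun i _ => in_P i).
Qed.

Lemma cardsD1_succ {T : finType} {J : {set T}} {j : T} {k : nat} :
  j \in J -> #|J| = k.+1 -> #|J :\ j| = k.
Proof. by move=> jJ; have := cardsD1 j J; rewrite jJ add1n => -> [->]. Qed.

Lemma emp_mean_leave_one_out {R : realType} {n : nat} {J : {set 'I_n}} {k : nat}
    (g : 'I_n -> R) :
  #|J| = k.+1 -> (0 < k)%N ->
  emp_mean J g = avg (enum J) (fun j => emp_mean (J :\ j) g).
Proof.
move=> J_card k_gt0; rewrite /avg big_enum -cardE J_card /emp_mean J_card.
have drop_one j : j \in J ->
    (#|J :\ j|%:R)^-1 * \sum_(i in J :\ j) g i = (k%:R)^-1 * (\sum_(i in J) g i - g j).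
  move=> jJ; rewrite (cardsD1_succ jJ J_card).
  by rewrite (big_setD1 j jJ) /= addrC addrK.
rewrite (eq_bigr _ drop_one) -big_distrr /= sumrB sumr_const J_card -mulr_natl.
have k_neq0 : k%:R != 0 :> R by rewrite pnatr_eq0 -lt0n.
have k1_neq0 : k%:R + 1 != 0 :> R by rewrite natr1.
by rewrite -natr1; field; rewrite k_neq0 k1_neq0.
Qed.

(* Double counting: the pairs (J, j) with j in J and #|J| = k+1 correspond
   bijectively, via J \ j, to the pairs (I, j) with j outside I and #|I| = k. *)
Lemma sum_leave_one_out {R : realType} {T : finType} (k : nat) (h : {set T} -> R) :
  \sum_(J : {set T} | #|J| == k.+1) \sum_(j in J) h (J :\ j) =
  (#|T| - k)%:R * \sum_(I : {set T} | #|I| == k) h I.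
Proof.
rewrite big_distrr /=.
under [RHS]eq_bigr => I /eqP I_card.
  have <- : \sum_(j in ~: I) h I = (#|T| - k)%:R * h I.
    by rewrite sumr_const mulr_natl cardsCs finset.setCK -I_card.
  over.
rewrite !pair_big_dep /=.
rewrite (reindex_onto (fun p : {set T} * T => (p.2 |: p.1, p.2))
                      (fun p : {set T} * T => (p.1 :\ p.2, p.2))) /=; last first.
  by case=> J j /= /andP[_ jJ]; rewrite finset.setD1K.
apply: eq_big => [[I j] /=|[I j] /= /andP[_ /eqP [->]] //].
rewrite finset.in_setC; have [jI|jI] /= := boolP (j \in I).
  rewrite finset.setU1r // andbF andbT; apply/negbTE/negP => /andP[_ /eqP [eq_I]].
  by have := jI; rewrite -eq_I !inE eqxx.
by rewrite finset.setU11 finset.setU1K // eqxx cardsU1 jI add1n eqSS !andbT.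
Qed.

Lemma loss_le_leave_one_out {R : realType} {P : R -> R -> Prop} {l : R -> R -> R}
    {n : nat} (F G : 'I_n -> R) (J : {set 'I_n}) (k : nat) :
  convex_loss_on P l -> (forall i, P (F i) (G i)) -> #|J| = k.+1 -> (0 < k)%N ->
  l (emp_mean J F) (emp_mean J G) <=
    (k.+1%:R)^-1 * \sum_(j in J) l (emp_mean (J :\ j) F) (emp_mean (J :\ j) G).
Proof.
move=> l_convex in_P J_card k_gt0.
rewrite (emp_mean_leave_one_out F J_card k_gt0) (emp_mean_leave_one_out G J_card k_gt0).
have J_neq0 : enum J != [::] by apply: enum_neq0; rewrite J_card.
have sub_in_domain : {in enum J, forall j,
    P (emp_mean (J :\ j) F) (emp_mean (J :\ j) G)}.
  move=> j; rewrite mem_enum => jJ; apply: emp_mean_in_domain l_convex in_P _.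
  by rewrite (cardsD1_succ jJ J_card).
have [_ jensen_le] := jensen _ _ l_convex J_neq0 sub_in_domain.
by apply: le_trans jensen_le _; rewrite /avg big_enum -cardE J_card.
Qed.

(* Normalizing constants: C(n,k+1)^-1 (k+1)^-1 (n-k) = C(n,k)^-1, from the
   absorption identity (k+1) C(n,k+1) = (n-k) C(n,k). *)
Lemma binomial_weight {R : realType} (n k : nat) : (k < n)%N ->
  ('C(n, k.+1)%:R)^-1 * ((k.+1%:R)^-1 * (n - k)%:R) = ('C(n, k)%:R)^-1 :> R.
Proof.
move=> k_lt_n.
have absorption : (k.+1%:R * 'C(n, k.+1)%:R : R) = (n - k)%:R * 'C(n, k)%:R.
  by rewrite -!natrM mul_bin_left.
have C1_neq0 : 'C(n, k.+1)%:R != 0 :> R by rewrite pnatr_eq0 -lt0n bin_gt0.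
have C_neq0 : 'C(n, k)%:R != 0 :> R by rewrite pnatr_eq0 -lt0n bin_gt0 ltnW.
have -> : (n - k)%:R = k.+1%:R * 'C(n, k.+1)%:R / 'C(n, k)%:R :> R.
  by rewrite absorption; field.
by field; rewrite C1_neq0 C_neq0 addrC natr1 pnatr_eq0.
Qed.

Lemma k_risk_succ_le {R : realType} {X : Type} {n : nat} {Z : 'I_n -> X * R}
    {f : X -> R} {P : R -> R -> Prop} {l : R -> R -> R} {k : nat} :
  convex_loss_on P l -> (forall i, P (f (Z i).1) (Z i).2) ->
  (0 < k)%N -> (k < n)%N -> k_risk l f Z k.+1 <= k_risk l f Z k.
Proof.
move=> l_convex in_P k_gt0 k_lt_n; rewrite /k_risk.
set L := fun I : {set 'I_n} =>
  l (emp_mean I (fun i => f (Z i).1)) (emp_mean I (fun i => (Z i).2)).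
have sum_le : \sum_(J : {set 'I_n} | #|J| == k.+1) L J <=
    (k.+1%:R)^-1 * ((n - k)%:R * \sum_(I : {set 'I_n} | #|I| == k) L I).
  have double_count := sum_leave_one_out k L; rewrite card_ord in double_count.
  rewrite -double_count big_distrr /=.
  apply: ler_sum => J /eqP J_card.
  exact: loss_le_leave_one_out l_convex in_P J_card k_gt0.
apply: le_trans (ler_wpM2l _ sum_le) _; first by rewrite invr_ge0.
by rewrite !mulrA -(mulrA _ _ (n - k)%:R) binomial_weight.
Qed.

Lemma k_risk_antitone {R : realType} {X : Type} {n : nat} {Z : 'I_n -> X * R}
    {f : X -> R} {P : R -> R -> Prop} {l : R -> R -> R} :
  convex_loss_on P l -> (forall i, P (f (Z i).1) (Z i).2) ->
  forall k k' : nat, (1 <= k)%N -> (k <= k')%N -> (k' <= n)%N ->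
    k_risk l f Z k' <= k_risk l f Z k.
Proof.
move=> l_convex in_P k k' k_gt0; elim: k' => [|m IH].
  by rewrite leqn0 => /eqP k_eq0; rewrite k_eq0 in k_gt0.
rewrite leq_eqVlt => /orP[/eqP <- //|k_le_m] m_lt_n.
apply: le_trans (IH k_le_m (ltnW m_lt_n)).
exact: k_risk_succ_le l_convex in_P (leq_trans k_gt0 k_le_m) m_lt_n.
Qed.

Theorem mainTheorem6 (R : realType) (X : Type) (n : nat)
    (Z : 'I_n -> X * R) (f : X -> R) :
  (forall l : R -> R -> R, doubly_convex l ->
     forall k k' : nat, (1 <= k)%N -> (k <= k')%N -> (k' <= n)%N ->
       k_risk l f Z k' <= k_risk l f Z k)
  /\
  ((forall x : X, 0 < f x < 1) -> (forall i : 'I_n, 0 <= (Z i).2 <= 1) ->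
     forall k k' : nat, (1 <= k)%N -> (k <= k')%N -> (k' <= n)%N ->
       k_risk (@kl_loss R) f Z k' <= k_risk (@kl_loss R) f Z k).
Proof.
split.
  move=> l l_convex.
  exact: k_risk_antitone (doubly_convex_on_setT l_convex) (fun _ => I).
move=> f_in_01 Z_in_01.
by apply: k_risk_antitone (kl_convex R) _ => i; split.
Qed.
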